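(* Let $N\ge 2$ be an integer and let $\Delta_N=\{p=(p_1,\dots,p_N)\in[0,1]^N:\ \sum_{i=1}^N p_i=1\}$. For $p\in\Delta_N$ define the normalized Shannon entropy $$H(p)=\frac{1}{\log N}\Big(-\sum_{i=1}^N p_i\log p_i\Big)\quad(\text{with }0\log 0=0),$$ the total variation distance to the uniform distribution $TV(p,q)=\frac12\sum_{i=1}^N\big|p_i-\frac1N\big|$ with $q=(1/N,\dots,1/N)$, and the statistical complexity $$C_{TV}(p)=H(p)\,TV(p,q)^2=-\frac{1}{4\log N}\Big(\sum_{i=1}^N p_i\log p_i\Big)\Big(\sum_{i=1}^N\Big|p_i-\frac1N\Big|\Big)^2.$$ Then the maximum of $C_{TV}$ over $\Delta_N$ is achieved on a distribution which, up to a permutation of the coordinates, belongs to the family $$p_i=\frac{1-p_{\max}}{K}\ \ (i=1,\dots,K),\qquad p_i=\frac{p_{\max}}{N-K}\ \ (i=K+1,\dots,N),$$ for some integer $K\in\{1,\dots,N-1\}$ and some constant $p_{\max}\in[0,1]$. *)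

From HB Require Import structures.
From mathcomp Require Import all_boot all_order all_algebra all_fingroup.
From mathcomp Require Import all_classical all_reals all_analysis.
Set Implicit Arguments. Unset Strict Implicit. Unset Printing Implicit Defensive.
Import Order.TTheory GRing.Theory Num.Theory.
Local Open Scope ring_scope.

Section Defs.
Variable R : realType.

Definition simplex (N : nat) (p : 'I_N -> R) : Prop :=
  (forall i, 0 <= p i <= 1) /\ \sum_(i < N) p i = 1.

Definition xlnx (x : R) : R := if x == 0 then 0 else x * ln x.

Definition entropyN (N : nat) (p : 'I_N -> R) : R :=
  (- \sum_(i < N) xlnx (p i)) / ln N%:R.

Definition TVunif (N : nat) (p : 'I_N -> R) : R :=
  (1 / 2) * \sum_(i < N) `|p i - 1 / N%:R|.

Definition CTV (N : nat) (p : 'I_N -> R) : R := entropyN p * TVunif p ^+ 2.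

End Defs.

From HB Require Import structures.
From mathcomp Require Import all_boot all_order all_algebra all_fingroup.
From mathcomp Require Import all_classical all_reals all_analysis.
From mathcomp Require Import lra.
Import Order.TTheory GRing.Theory Num.Theory.
Import numFieldNormedType.Exports.
Local Open Scope ring_scope.

(* Let S be the set of coordinates of p lying below 1/N.  Replacing p by its
   average over S and by its average over the complement of S does not change
   the distance to the uniform distribution, because each block lies on one side
   of 1/N, and does not decrease the entropy, by Jensen's inequality for the
   convex function x log x.  So C_TV is dominated by its values on two-level
   distributions; for a fixed K = |S| these form a continuous curve in the mass
   p_max of the upper block, which attains its maximum on [0, 1], and the best of
   the finitely many K in [1, N - 1] gives the maximizer.  If S is empty, then p
   is uniform and C_TV p = 0. *)

Section XLnX.
Variable R : realType.
Implicit Types x c : R.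

Lemma xlnxE x : xlnx x = x * ln x.
Proof. by rewrite /xlnx; case: eqP => // ->; rewrite mul0r. Qed.

Lemma xlnx_le0 x : 0 <= x <= 1 -> xlnx x <= 0.
Proof. by case/andP=> x0 x1; rewrite xlnxE mulr_ge0_le0 // ln_le0. Qed.

Lemma xlnx_ge_tangent c x : 0 < c -> 0 <= x -> x * ln c + x - c <= xlnx x.
Proof.
move=> c0; rewrite le0r => /orP[/eqP->|x0].
  by rewrite xlnxE !mul0r !add0r oppr_le0 ltW.
have : ln c - ln x <= c / x - 1.
  rewrite -ln_div ?posrE // -[X in ln X](subrK 1) addrC le_ln1Dx //.
  by rewrite ltrBrDl subrr divr_gt0.
rewrite -(ler_pM2l x0) mulrBr mulrBr mulrCA mulfV ?gt_eqF // xlnxE.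
lra.
Qed.

Lemma norm_xlnx_le x : x <= 1 -> `|xlnx x| <= 2 * Num.sqrt `|x|.
Proof.
move=> x1; have [x_le0|x_gt0] := leP x 0.
  by rewrite xlnxE ln0 // mulr0 normr0 mulr_ge0 ?sqrtr_ge0.
rewrite (gtr0_norm x_gt0).
rewrite xlnxE ler0_norm; last by apply: mulr_ge0_le0; [exact: ltW | exact: ln_le0].
set s := Num.sqrt x.
have s_gt0 : 0 < s by rewrite sqrtr_gt0.
have xs : x = s ^+ 2 by rewrite sqr_sqrtr // ltW.
(* [- x ln x = 2 s (s ln (1 / s))] and [ln y < y] at [y = 1 / s] *)
have : s * - ln s <= 1.
  have /ln_sublinear : 0 < s^-1 by rewrite invr_gt0.
  by rewrite lnV ?posrE // -(ltr_pM2l s_gt0) mulfV ?gt_eqF // => /ltW.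
rewrite xs lnXn // mulr2n; nra.
Qed.

Local Open Scope classical_set_scope.

Lemma continuous_xlnx : continuous (@xlnx R).
Proof.
move=> a; have [a_lt0|a_gt0|->] := ltrgtP a 0.
- apply: (near_cst_continuous 0); near=> x.
  rewrite xlnxE ln0 ?mulr0 //; near: x.
  by apply: lt_le_nbhsl.
- rewrite (_ : @xlnx R = fun x => x * ln x); last by apply/funext => x; rewrite xlnxE.
  by apply: cvgM; [exact: cvg_id | exact: continuous_ln].
- have sqrt_cvg0 : (2 * Num.sqrt `|x|) @[x --> (0 : R)] --> (0 : R).
    have : {for 0, continuous (fun x : R => 2 * Num.sqrt `|x|)}.
      apply: cvgMl_tmp; apply: continuous_comp; first exact: norm_continuous.
      exact: sqrt_continuous.
    by rewrite /prop_for /continuous_at /= normr0 sqrtr0 mulr0.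
  rewrite /continuous_at [X in _ --> X]xlnxE mul0r.
  have Nsqrt_cvg0 : (- (2 * Num.sqrt `|x|)) @[x --> (0 : R)] --> (0 : R).
    by rewrite -[X in _ --> X]oppr0; apply: cvgN.
  apply: (squeeze_cvgr _ Nsqrt_cvg0 sqrt_cvg0).
  near=> x; rewrite -ler_norml; apply: norm_xlnx_le.
  by near: x; apply: nbhs0_ltW.
Unshelve. all: by end_near. Qed.
End XLnX.

Section BlockMean.
Context {R : realType} {I : finType}.
Implicit Types (A S : {set I}) (q : I -> R).

(* For empty [A] the mean is [0 / 0 = 0], so [mulr_card_mean] needs no side condition. *)
Definition mean A q : R := (\sum_(i in A) q i) / #|A|%:R.

Definition block_mean S q : I -> R :=
  fun i => if i \in S then mean S q else mean (~: S) q.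

Lemma mulr_card_mean A q : #|A|%:R * mean A q = \sum_(i in A) q i.
Proof.
have [/cards0_eq A0|A_gt0] := posnP #|A|; first by rewrite A0 cards0 mul0r big_set0.
by rewrite mulrC divfK // pnatr_eq0 -lt0n.
Qed.

Lemma sum_setC S (F : I -> R) :
  \sum_i F i = \sum_(i in S) F i + \sum_(i in ~: S) F i.
Proof.
by rewrite (bigID (mem S)) /=; congr (_ + _); apply: eq_bigl => i; rewrite !inE.
Qed.

Lemma sum_if_set S (g : R -> R) a b :
  \sum_i g (if i \in S then a else b) = #|S|%:R * g a + #|~: S|%:R * g b.
Proof.
rewrite (sum_setC S) !mulr_natl -!sumr_const.
congr (_ + _); apply: eq_bigr => i; first by move->.
by rewrite inE => /negbTE ->.
Qed.

Lemma xlnx_mean_le A q : {in A, forall i, 0 <= q i} ->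
  #|A|%:R * xlnx (mean A q) <= \sum_(i in A) xlnx (q i).
Proof.
move=> q_ge0; set m := mean A q; have sum_q := mulr_card_mean A q; rewrite -/m in sum_q.
have : 0 <= m by rewrite divr_ge0 ?sumr_ge0.
rewrite le0r => /orP[/eqP m0|m_gt0].
  have q0 : {in A, forall i, q i = 0}.
    by apply/psumr_eq0P => //; rewrite -sum_q m0 mulr0.
  by rewrite m0 xlnxE mul0r mulr0 big1 // => i /q0 ->; rewrite xlnxE mul0r.
apply: (@le_trans _ _ (\sum_(i in A) (q i * ln m + q i - m))).
  rewrite !big_split /= sumrN -mulr_suml sumr_const -sum_q xlnxE -mulr_natl.
  lra.
by apply: ler_sum => i iA; apply: xlnx_ge_tangent; last exact: q_ge0.
Qed.

Lemma sum_norm_same_sign (J : Type) (r : seq J) (P : pred J) (f : J -> R) :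
  (forall j, P j -> 0 <= f j) \/ (forall j, P j -> f j <= 0) ->
  \sum_(j <- r | P j) `|f j| = `|\sum_(j <- r | P j) f j|.
Proof.
case=> f_sign.
  rewrite ger0_norm ?sumr_ge0 //; apply: eq_bigr => j /f_sign; exact: ger0_norm.
rewrite ler0_norm ?sumr_le0 // -sumrN; apply: eq_bigr => j /f_sign; exact: ler0_norm.
Qed.

Lemma sum_dist_mean A q u :
  {in A, forall i, q i <= u} \/ {in A, forall i, u <= q i} ->
  \sum_(i in A) `|q i - u| = #|A|%:R * `|mean A q - u|.
Proof.
move=> q_side; rewrite sum_norm_same_sign; last first.
  by case: q_side => q_side; [right|left] => i /q_side; rewrite (subr_le0, subr_ge0).
by rewrite sumrB sumr_const -mulr_card_mean -[u *+ _]mulr_natl -mulrBr normrM normr_nat.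
Qed.

Lemma sum_xlnx_block_mean_le S q : (forall i, 0 <= q i) ->
  \sum_i xlnx (block_mean S q i) <= \sum_i xlnx (q i).
Proof.
move=> q_ge0; rewrite sum_if_set [leRHS](sum_setC S).
by apply: lerD; apply: xlnx_mean_le => i _.
Qed.

Lemma sum_dist_block_mean q u :
  \sum_i `|block_mean [set i | q i < u] q i - u| = \sum_i `|q i - u|.
Proof.
set S := [set i | q i < u].
rewrite (sum_if_set S (fun x => `|x - u|)) [RHS](sum_setC S).
rewrite !sum_dist_mean //; [right | left] => i; rewrite !inE.
  by rewrite -leNgt.
exact: ltW.
Qed.
End BlockMean.

Lemma continuous_sum (R : realType) (T : topologicalType) (J : Type) (r : seq J)
    (P : pred J) (f : J -> T -> R) :
  (forall j, continuous (f j)) -> continuous (fun t => \sum_(j <- r | P j) f j t).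
Proof.
move=> f_cont; rewrite -fct_sumE; apply: (big_ind (fun g => continuous g)) => //.
  exact: cst_continuous.
by move=> g h g_cont h_cont t; apply: continuousD; [exact: g_cont | exact: h_cont].
Qed.

Section Complexity.
Context {R : realType} {N : nat}.
Implicit Types (p q : 'I_N -> R) (S : {set 'I_N}).

Lemma ln_natr_ge0 (n : nat) : 0 <= ln (n%:R : R).
Proof. by case: n => [|n]; [rewrite ln0 | rewrite ln_ge0 // ler1n]. Qed.

Lemma CTV_ge0 p : simplex p -> 0 <= CTV p.
Proof.
case=> p01 _; rewrite /CTV /entropyN mulr_ge0 ?sqr_ge0 // divr_ge0 ?ln_natr_ge0 //.
by rewrite oppr_ge0 sumr_le0 // => i _; apply: xlnx_le0.
Qed.

Lemma sum_uniform : (0 < N)%N -> \sum_(i < N) (1 / N%:R : R) = 1.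
Proof.
move=> N_gt0; rewrite sumr_const card_ord -[(_ / _) *+ _]mulr_natr divfK //.
by rewrite pnatr_eq0 -lt0n.
Qed.

Lemma card_setC_ord S : #|~: S| = (N - #|S|)%N.
Proof. by rewrite cardsCs finset.setCK card_ord. Qed.

Lemma sum_ltn_if K (g : R -> R) a b : (K <= N)%N ->
  \sum_(i < N) g (if (i < K)%N then a else b) = K%:R * g a + (N - K)%:R * g b.
Proof.
move=> K_le_N; set S := [set i : 'I_N | (i < K)%N].
have card_S : #|S| = K.
  have widen_inj : injective (widen_ord K_le_N) by move=> i j /(congr1 val) /= /val_inj.
  rewrite -[RHS]card_ord -(card_imset _ widen_inj).
  apply: eq_card => i; rewrite !inE; apply/idP/imsetP => [i_lt_K | [j _ ->]].
    by exists (Ordinal i_lt_K) => //; apply: val_inj.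
  exact: (ltn_ord j).
transitivity (\sum_(i < N) g (if i \in S then a else b)).
  by apply: eq_bigr => i _; rewrite inE.
by rewrite sum_if_set card_setC_ord card_S.
Qed.

Lemma CTV_if_set S (a b : R) :
  CTV (fun i => if i \in S then a else b) =
  CTV (fun i : 'I_N => if (i < #|S|)%N then a else b).
Proof.
have S_le_N : (#|S| <= N)%N by rewrite -[X in (_ <= X)%N](card_ord N) max_card.
pose dist (x : R) := `|x - 1 / N%:R|.
rewrite /CTV /entropyN /TVunif !(sum_if_set _ (@xlnx R)) !(sum_ltn_if _ (@xlnx R)) //.
by rewrite !(sum_if_set _ dist) !(sum_ltn_if _ dist) // card_setC_ord.
Qed.

Definition two_level (K : nat) (t : R) : 'I_N -> R :=
  fun i => if (i < K)%N then (1 - t) / K%:R else t / (N - K)%:R.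

Lemma two_level_simplex K t : (0 < K < N)%N -> 0 <= t <= 1 -> simplex (two_level K t).
Proof.
case/andP=> K_gt0 K_lt_N t01.
have div_natr_01 (x : R) (n : nat) : 0 <= x <= 1 -> (0 < n)%N -> 0 <= x / n%:R <= 1.
  case/andP=> x_ge0 x_le1 n_gt0; apply/andP; split; first exact: divr_ge0.
  rewrite ler_pdivrMr ?ltr0n // mul1r.
  by apply: le_trans x_le1 _; rewrite ler1n.
split=> [i|].
  rewrite /two_level; case: ifP => _; apply: div_natr_01 => //; last by rewrite subn_gt0.
  by case/andP: t01 => t_ge0 t_le1; rewrite subr_ge0 gerBl t_ge0 t_le1.
have natr_neq0 n : (0 < n)%N -> n%:R != 0 :> R by rewrite pnatr_eq0 -lt0n.
rewrite (sum_ltn_if _ id); last exact: ltnW.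
by rewrite ![_%:R * (_ / _)]mulrC !divfK ?subrK // natr_neq0 // subn_gt0.
Qed.

Lemma block_mean_CTV_two_level S q : \sum_i q i = 1 ->
  CTV (block_mean S q) = CTV (two_level #|S| (\sum_(i in ~: S) q i)).
Proof.
move=> q1; rewrite /block_mean CTV_if_set /two_level /mean card_setC_ord.
by rewrite -[in 1 - _]q1 (sum_setC S) addrK.
Qed.

Definition below_uniform q : {set 'I_N} := [set i | q i < 1 / N%:R].

Lemma CTV_le_block_mean q : (forall i, 0 <= q i) ->
  CTV q <= CTV (block_mean (below_uniform q) q).
Proof.
move=> q_ge0; rewrite /below_uniform /CTV /TVunif sum_dist_block_mean.
rewrite ler_wpM2r ?sqr_ge0 // /entropyN ler_wpM2r ?invr_ge0 ?ln_natr_ge0 //.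
by rewrite lerN2 sum_xlnx_block_mean_le.
Qed.

Lemma card_below_uniform_lt q : (0 < N)%N -> simplex q ->
  (#|below_uniform q| < N)%N.
Proof.
move=> N_gt0 [_ q1]; rewrite ltn_neqAle -[X in (_ <= X)%N](card_ord N) max_card andbT.
apply/eqP => card_S.
have S_T : below_uniform q = [set: 'I_N].
  by apply/eqP; rewrite eqEcard finset.subsetT cardsT card_ord card_S leqnn.
have : \sum_(i < N) q i < \sum_(i < N) (1 / N%:R : R).
  apply: ltr_sum => [|i _].
    by apply/hasP; exists (Ordinal N_gt0); rewrite ?mem_index_enum.
  have : i \in below_uniform q by rewrite S_T inE.
  by rewrite inE.
by rewrite q1 sum_uniform // ltxx.
Qed.

Lemma CTV_eq0_of_ge_uniform q : (0 < N)%N -> simplex q ->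
  (forall i, 1 / N%:R <= q i) -> CTV q = 0.
Proof.
move=> N_gt0 [_ q1] q_ge; rewrite /CTV /TVunif sum_norm_same_sign; last first.
  by left=> i _; rewrite subr_ge0.
by rewrite sumrB q1 sum_uniform // subrr normr0 mulr0 expr0n mulr0.
Qed.

Lemma continuous_CTV (T : topologicalType) (f : T -> 'I_N -> R) :
  (forall i, continuous (f^~ i)) -> continuous (fun t => CTV (f t)).
Proof.
move=> f_cont t; rewrite /CTV /entropyN /TVunif.
have xlnx_f i : continuous (fun t => xlnx (f t i)).
  by move=> x; apply: continuous_comp; [exact: f_cont | exact: continuous_xlnx].
have dist_f i : continuous (fun t => `|f t i - 1 / N%:R|).
  by move=> x; apply: cvg_norm; apply: cvgB; [exact: f_cont | exact: cvg_cst].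
apply: cvgM; first by apply: cvgMr_tmp; apply: cvgN; apply: continuous_sum.
have TV_f : continuous (fun t => 1 / 2 * \sum_(i < N) `|f t i - 1 / N%:R|).
  by move=> x; apply: cvgMl_tmp; apply: continuous_sum.
exact: (continuous_comp (TV_f t) (@exprn_continuous R 2 _)).
Qed.

Lemma continuous_CTV_two_level K : continuous (fun t => CTV (two_level K t)).
Proof.
apply: continuous_CTV => i t; rewrite /two_level; case: (i < K)%N; apply: cvgMr_tmp.
  by apply: cvgB; [exact: cvg_cst | exact: cvg_id].
exact: cvg_id.
Qed.

Lemma CTV_two_level_argmax K : exists t, 0 <= t <= 1 /\
  forall u, 0 <= u <= 1 -> CTV (two_level K u) <= CTV (two_level K t).
Proof.
have [t] := EVT_max ler01 (continuous_subspaceT (continuous_CTV_two_level K)).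
by rewrite in_itv => t01 t_max; exists t; split=> // u u01; apply: t_max; rewrite in_itv.
Qed.

Lemma CTV_reduction q : (0 < N)%N -> simplex q -> CTV q <= 0 \/
  exists2 K : 'I_N, (0 < K)%N & exists2 t, 0 <= t <= 1 & CTV q <= CTV (two_level K t).
Proof.
move=> N_gt0 q_simplex; have [q01 q1] := q_simplex.
have q_ge0 i : 0 <= q i by case/andP: (q01 i).
set S := below_uniform q.
have [/cards0_eq S0|S_gt0] := posnP #|S|.
  left; rewrite CTV_eq0_of_ge_uniform // => i.
  have : i \notin S by rewrite S0 inE.
  by rewrite inE -leNgt.
right; exists (Ordinal (card_below_uniform_lt _ N_gt0 q_simplex)) => //.
exists (\sum_(i in ~: S) q i).
  by rewrite sumr_ge0 //= -q1 (sum_setC S) lerDr sumr_ge0.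
by rewrite /= -block_mean_CTV_two_level // CTV_le_block_mean.
Qed.

End Complexity.

Arguments two_level {R} N K t.

Theorem lemma4 (R : realType) (N : nat) (hN : (2 <= N)%N) :
  exists p : 'I_N -> R,
    simplex p /\
    (forall q : 'I_N -> R, simplex q -> CTV q <= CTV p) /\
    exists (s : {perm 'I_N}) (K : nat) (pmax : R),
      [/\ (1 <= K)%N, (K <= N - 1)%N, 0 <= pmax <= 1 &
        forall i : 'I_N,
          p (s i) = if (i < K)%N then (1 - pmax) / K%:R
                    else pmax / (N - K)%:R].
Proof.
have N_gt0 : (0 < N)%N by apply: ltnW.
have [t t_max] := choice (@CTV_two_level_argmax R N).
pose best K := CTV (two_level N K (t K)).
have [K K_gt0 K_best] :=
  @arg_maxP _ _ _ (Ordinal hN) (fun K : 'I_N => (0 < K)%N) best isT.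
have [t01 _] := t_max K; have K_simplex : simplex (two_level N K (t K)).
  by apply: two_level_simplex => //; rewrite K_gt0 ltn_ord.
exists (two_level N K (t K)); split=> //; split.
  move=> q /(CTV_reduction _ N_gt0) [q_le0|[K' K'_gt0 [u u01 q_le]]].
    exact: le_trans q_le0 (CTV_ge0 _ K_simplex).
  by apply: (le_trans q_le); apply: le_trans ((t_max K').2 u u01) (K_best K' K'_gt0).
exists 1%g, K, (t K); split=> //; first by rewrite subn1 -ltnS prednK.
by move=> i; rewrite perm1.
Qed.
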